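(* Let $m\ge 2$ be an integer and let $n$ be a positive integer with $m^j\le n<m^{j+1}$ for some integer $j\ge 0$, with base $m$ representation $n=\alpha_j m^j+\cdots+\alpha_1 m+\alpha_0$ ($\alpha_j>0$, $0\le\alpha_i\le m-1$). For $1\le i\le j$ let $\chi_i=0$ if $\alpha_{i-1}>0$ and $\chi_i=1$ if $\alpha_{i-1}=0$. Then \[ c_m(mn)\equiv \alpha_0+(\alpha_0-1)\sum_{i=1}^{j}(\alpha_1-\chi_1)(\alpha_2-\chi_2)\cdots(\alpha_i-\chi_i)\pmod m. \]
   Context: An $m$-ary partition of a positive integer $N$ is a partition of $N$ in which every part is a power of $m$. It is without gaps if, whenever $m^i$ is its largest part, every $m^k$ with $0\le k<i$ also appears as a part. $c_m(N)$ denotes the number of $m$-ary partitions of $N$ without gaps. *)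

From mathcomp Require Import all_boot all_order all_algebra.
Set Implicit Arguments. Unset Strict Implicit. Unset Printing Implicit Defensive.
Import GRing.Theory Num.Theory.

(* A partition of N is represented by its multiplicity function
   mu : part p (0 <= p <= N) |-> number of times p occurs (0 <= mu p <= N),
   with mu 0 = 0 (parts are positive) and \sum_p p * mu p = N. *)
Definition is_partition (N : nat) (mu : {ffun 'I_N.+1 -> 'I_N.+1}) : bool :=
  (mu ord0 == 0 :> nat) && (\sum_(p : 'I_N.+1) p * mu p == N)%N.

Definition is_mary (m N : nat) (mu : {ffun 'I_N.+1 -> 'I_N.+1}) : bool :=
  [forall p : 'I_N.+1, (0 < mu p)%N ==> [exists k : 'I_N.+1, p == m ^ k :> nat]].

Definition no_gaps (m N : nat) (mu : {ffun 'I_N.+1 -> 'I_N.+1}) : bool :=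
  [forall p : 'I_N.+1,
     ((0 < mu p)%N && [forall q : 'I_N.+1, (p < q)%N ==> (mu q == 0 :> nat)]) ==>
     [forall i : 'I_N.+1, (p == m ^ i :> nat) ==>
        [forall k : 'I_N.+1, (k < i)%N ==> (0 < mu (inord (m ^ k)))%N]]].

Definition c (m N : nat) : nat :=
  #|[set mu : {ffun 'I_N.+1 -> 'I_N.+1} |
       [&& is_partition mu, is_mary m mu & no_gaps m mu]]|.

Definition chi (alpha : nat -> nat) (i : nat) : int :=
  if (0 < alpha i.-1)%N then 0%R else 1%R.

From mathcomp Require Import all_boot all_order all_algebra.
From mathcomp Require Import ring.
Import GRing.Theory Num.Theory.
Set Implicit Arguments. Unset Strict Implicit. Unset Printing Implicit Defensive.

(* Describe a partition by its multiplicity function f.  It is an m-ary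
   partition without gaps iff every part p other than 1 is divisible by m with
   p/m again a part.  So a gap-free partition of N > 0 is made of f 1 >= 1 ones
   together with m times a gap-free partition of t = (N - f 1)/m, and this is a
   bijection; hence c(N + 1) = \sum_(t <= N/m) c(t).  The partial sums
   S(x) = \sum_(t <= x) c(t) then satisfy S(x + 1) = S(x) + S(x/m), and
   c(mn) = S(n - 1).  Iterating the recursion gives S(mq + a) = S(mq) + a S(q)
   for a <= m and S(mq) = 1 (mod m), so S(mq + a) = 1 + a S(q) (mod m).
   Peeling off the base-m digits of n - 1 one at a time yields the formula:
   a vanishing digit of n causes a borrow in n - 1, which is what chi records. *)

(** * Multiplicity functions *)

Section Multiplicities.
Variable N : nat.
Implicit Type mu : {ffun 'I_N.+1 -> 'I_N.+1}.

Definition mult mu p : nat := if p <= N then val (mu (inord p)) else 0.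

Definition tabulate (f : nat -> nat) : {ffun 'I_N.+1 -> 'I_N.+1} :=
  [ffun p : 'I_N.+1 => inord (f p)].

Lemma mult_ord mu (p : 'I_N.+1) : mult mu p = mu p.
Proof. by rewrite /mult -ltnS ltn_ord inord_val. Qed.

Lemma mult_le mu p : p <= N -> mult mu p = mu (inord p).
Proof. by rewrite /mult => ->. Qed.

Lemma mult_gt mu p : N < p -> mult mu p = 0.
Proof. by rewrite /mult ltnNge => /negbTE->. Qed.

Lemma mult_inj mu nu : mult mu =1 mult nu -> mu = nu.
Proof. by move=> e; apply/ffunP => p; apply/val_inj; rewrite /= -!mult_ord e. Qed.

Lemma mult_tabulate (f : nat -> nat) :
  (forall p, N < p -> f p = 0) -> (forall p, f p <= N) -> mult (tabulate f) =1 f.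
Proof.
move=> f_gt f_le p; rewrite /mult; case: leqP => [le_pN | /f_gt-> //].
by rewrite ffunE /= inordK ?inordK ?ltnS.
Qed.

End Multiplicities.

Definition weight N (f : nat -> nat) : nat := \sum_(p < N.+1) p * f p.

Definition partition_fun N (f : nat -> nat) : Prop :=
  [/\ f 0 = 0, forall p, N < p -> f p = 0 & weight N f = N].

Definition down_closed m (f : nat -> nat) : Prop :=
  forall p, 0 < f p -> p = 1 \/ m %| p /\ 0 < f (p %/ m).

Definition gapfree_fun m N f := partition_fun N f /\ down_closed m f.

Definition divparts m (f : nat -> nat) q := f (m * q).

Definition mulparts m (g : nat -> nat) p := if m %| p then g (p %/ m) else 0.

Definition with_ones k (f : nat -> nat) p := if p == 1 then k else f p.

Lemma eq_weight N f g : f =1 g -> weight N f = weight N g.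
Proof. by move=> e; apply: eq_bigr => p _; rewrite e. Qed.

Lemma weight_term_le N f p : p <= N -> p * f p <= weight N f.
Proof.
by move=> le_pN; rewrite /weight (bigD1 (Ordinal (le_pN : p < N.+1))) //= leq_addr.
Qed.

Lemma weight_widen N K f :
  N <= K -> (forall p, N < p -> f p = 0) -> weight K f = weight N f.
Proof.
move=> le_NK f_gt; rewrite /weight (big_ord_widen _ (fun p => p * f p) (_ : N.+1 <= K.+1)) //.
rewrite [RHS]big_mkcond; apply: eq_bigr => p _; case: ltnP => // /f_gt->.
by rewrite muln0.
Qed.

Lemma sum_dvdn_mul (m K : nat) (F : nat -> nat) : 0 < m ->
  \sum_(0 <= p < m * K | m %| p) F p = \sum_(0 <= q < K) F (m * q).
Proof.
move=> m_gt0; elim: K => [|K IH]; first by rewrite muln0 !big_geq.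
rewrite big_nat_recr //= -IH mulnS addnC (big_cat_nat (n := m * K)) ?leq_addr //=.
congr (_ + _); rewrite -{1}[m * K]add0n big_addn addKn big_ltn_cond //= add0n.
rewrite dvdn_mulr // big_nat_cond big1 ?addn0 // => r /andP[/andP[r_gt0 lt_rm] dvd_mr].
move: dvd_mr; rewrite dvdn_addl ?dvdn_mulr // => /(dvdn_leq r_gt0).
by rewrite leqNgt lt_rm.
Qed.

Lemma weight_split m N f : 1 < m -> (forall p, N < p -> f p = 0) ->
  (forall p, 0 < f p -> p = 1 \/ m %| p) ->
  weight N f = f 1 + m * weight N (divparts m f).
Proof.
move=> m_gt1 f_gt f_supp; have m_gt0 := ltnW m_gt1.
have mN_gt0 : 0 < m * N.+1 by rewrite muln_gt0 m_gt0.
have le_NmN : N <= (m * N.+1).-1 by rewrite -ltnS prednK // leq_pmull.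
rewrite -(weight_widen le_NmN f_gt) /weight /divparts prednK //.
rewrite -(big_mkord xpredT (fun p => p * f p)) -(big_mkord xpredT (fun q => q * f (m * q))).
rewrite (eq_bigr (fun p => (p == 1) * f 1 + (if m %| p then p * f p else 0))); last first.
  move=> p _; case: eqVneq => [-> | p_neq1] /=.
    by rewrite dvdn1 mul1n; case: eqVneq m_gt1 => [-> //|]; rewrite addn0.
  case: ifP => dvd_mp //; case: (posnP (f p)) => [-> | /f_supp[p_eq1 | ]].
  - by rewrite muln0.
  - by rewrite p_eq1 in p_neq1.
  - by rewrite dvd_mp.
rewrite big_split /= -big_mkcond sum_dvdn_mul // big_distrr /=; congr (_ + _).
  rewrite (big_cat_nat (n := 2)) //= ?(leq_trans m_gt1) ?leq_pmulr //.
  rewrite big_nat_recr //= big_nat1 big_nat_cond big1 => [|p /andP[/andP[p_gt1 _] _]].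
    by rewrite /= mul0n mul1n addn0.
  by rewrite eqn_leq leqNgt p_gt1.
by apply: eq_bigr => q _; rewrite mulnA.
Qed.

Lemma gapfree_fun_eq m N f g : f =1 g -> gapfree_fun m N f -> gapfree_fun m N g.
Proof.
move=> e [[f0 f_gt wf] dcf]; split; last by move=> p; rewrite -!e => /dcf.
by split=> [|p /f_gt|]; rewrite -?e // -(eq_weight _ e).
Qed.

Lemma partition_fun_le N f : partition_fun N f -> forall p, f p <= N.
Proof.
case=> f0 f_gt wf p; case: (posnP p) => [-> | p_gt0]; first by rewrite f0.
case: (leqP p N) => [le_pN | /f_gt-> //].
by rewrite -[X in _ <= X]wf (leq_trans (leq_pmull _ p_gt0)) // weight_term_le.
Qed.

Lemma mult_tabulate_partition N f : partition_fun N f -> mult (tabulate N f) =1 f.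
Proof. by move=> pf; apply: mult_tabulate; [case: pf | apply: partition_fun_le]. Qed.

(** * Gap-free partitions are the down-closed ones *)

Section DownClosed.
Variables (m : nat) (f : nat -> nat).
Hypotheses (m_gt1 : 1 < m) (f0 : f 0 = 0) (dc : down_closed m f).

Lemma down_closed_pow p : 0 < f p -> exists k, p = m ^ k.
Proof.
elim/ltn_ind: p => p IH fp_gt0; case: (dc fp_gt0) => [-> | [dvd_mp fpm_gt0]].
  by exists 0.
have p_gt0 : 0 < p by case: p fp_gt0 {IH dvd_mp fpm_gt0} => [|p]; rewrite ?f0.
have [k pm_eq] := IH _ (ltn_Pdiv m_gt1 p_gt0) fpm_gt0.
by exists k.+1; rewrite expnSr -pm_eq divnK.
Qed.

Lemma down_closed_exp i k : 0 < f (m ^ i) -> k <= i -> 0 < f (m ^ k).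
Proof.
elim: i => [|i IH] fi_gt0; first by rewrite leqn0 => /eqP->.
rewrite leq_eqVlt => /orP[/eqP-> // | lt_ki]; apply: IH => //.
case: (dc fi_gt0) => [/eqP | [_]]; first by rewrite -(expn0 m) eqn_exp2l.
by rewrite expnSr mulnK ?(ltnW m_gt1).
Qed.

Lemma down_closed_one p : 0 < f p -> 0 < f 1.
Proof.
move=> fp_gt0; have [k def_p] := down_closed_pow fp_gt0.
by rewrite def_p in fp_gt0; apply: (down_closed_exp (k := 0) fp_gt0).
Qed.

End DownClosed.

Definition gapfree_partitions m N := [set mu : {ffun 'I_N.+1 -> 'I_N.+1} |
  [&& is_partition mu, is_mary m mu & no_gaps m mu]].

Section GapfreePartitions.
Variables (m N : nat) (mu : {ffun 'I_N.+1 -> 'I_N.+1}).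
Hypothesis m_gt1 : 1 < m.

Lemma is_partitionP : reflect (partition_fun N (mult mu)) (is_partition mu).
Proof.
rewrite /is_partition; have -> : \sum_(p : 'I_N.+1) p * mu p = weight N (mult mu).
  by apply: eq_bigr => p _; rewrite mult_ord.
rewrite -(mult_ord mu ord0); apply: (iffP andP) => [[/eqP mu0 /eqP wmu] | [mu0 _ wmu]].
  by split=> // p; apply: mult_gt.
by rewrite mu0 wmu.
Qed.

Lemma mary_no_gaps_down_closed :
  is_mary m mu -> no_gaps m mu -> down_closed m (mult mu).
Proof.
move=> /forallP mary /forallP gaps p mup_gt0.
have le_pN : p <= N by apply: contraTT mup_gt0; rewrite -ltnNge => /(mult_gt mu)->.
have muP_gt0 : 0 < mu (Ordinal (le_pN : p < N.+1)) by rewrite -mult_ord.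
have [k /eqP /= def_p] := existsP (implyP (mary _) muP_gt0).
rewrite def_p; case: (posnP k) => [-> | k_gt0]; [by left | right].
have [k1 def_k] : exists k1, k = k1.+1 :> nat by exists k.-1; rewrite prednK.
rewrite def_k expnSr mulnK ?(ltnW m_gt1) // dvdn_mull //; split=> //.
have [Q muQ_gt0 Q_max] := @arg_maxnP _ _ (fun q => 0 < mu q) val muP_gt0.
have [i Q_eq] := existsP (implyP (mary _) muQ_gt0).
have Q_top : [forall q : 'I_N.+1, (Q < q) ==> (mu q == 0 :> nat)].
  apply/forallP => q; apply/implyP; rewrite ltnNge; apply: contraNT.
  by rewrite -lt0n => /Q_max.
have /forallP/(_ i)/implyP/(_ Q_eq)/forallP gaps_Q :=
  implyP (gaps Q) (introT andP (conj muQ_gt0 Q_top)).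
have le_pQ : m ^ k <= m ^ i by rewrite -def_p -(eqP Q_eq); apply: Q_max muP_gt0.
have lt_k1i : k1 < i by rewrite -def_k -(leq_exp2l _ _ m_gt1).
have lt_k1N : k1 < N.+1 by rewrite (ltn_trans _ (ltn_ord k)) ?def_k.
have le_mk1N : m ^ k1 <= N.
  by rewrite -ltnS (leq_ltn_trans _ (ltn_ord Q)) // (eqP Q_eq) leq_exp2l // ltnW.
by rewrite mult_le //; apply: (implyP (gaps_Q (Ordinal lt_k1N))).
Qed.

Lemma down_closed_mary : mult mu 0 = 0 -> down_closed m (mult mu) -> is_mary m mu.
Proof.
move=> mu0 dc; apply/forallP => p; apply/implyP; rewrite -mult_ord => mup_gt0.
have [k def_p] := down_closed_pow m_gt1 mu0 dc mup_gt0.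
have lt_kN : k < N.+1 by rewrite (leq_trans (ltn_expl k m_gt1)) // -def_p ltnW.
by apply/existsP; exists (Ordinal lt_kN); rewrite def_p.
Qed.

Lemma down_closed_no_gaps : down_closed m (mult mu) -> no_gaps m mu.
Proof.
move=> dc; apply/forallP => p; apply/implyP => /andP[mup_gt0 _].
apply/forallP => i; apply/implyP => /eqP def_p.
apply/forallP => k; apply/implyP => lt_ki.
rewrite -mult_ord def_p in mup_gt0.
have le_kN : m ^ k <= N.
  by rewrite -ltnS (leq_ltn_trans _ (ltn_ord p)) // def_p leq_exp2l // ltnW.
by rewrite -mult_le // (down_closed_exp m_gt1 dc mup_gt0 (ltnW lt_ki)).
Qed.

Lemma gapfree_partitionsP :
  mu \in gapfree_partitions m N <-> gapfree_fun m N (mult mu).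
Proof.
rewrite inE; split=> [/and3P[/is_partitionP pmu mary gaps] | [pmu dc]].
  by split; last exact: mary_no_gaps_down_closed.
have [mu0 _ _] := pmu.
by apply/and3P; split; [apply/is_partitionP | exact: down_closed_mary
                        | exact: down_closed_no_gaps].
Qed.

End GapfreePartitions.

Lemma tabulate_gapfree m N f : 1 < m -> gapfree_fun m N f ->
  tabulate N f \in gapfree_partitions m N.
Proof.
move=> m_gt1 gf; apply/gapfree_partitionsP => //.
have e := mult_tabulate_partition (proj1 gf).
by apply: gapfree_fun_eq gf => p; rewrite e.
Qed.

(** * Removing the ones and dividing by m *)

Section Parts.
Variable m : nat.
Hypothesis m_gt1 : 1 < m.

Let m_gt0 : 0 < m. Proof. exact: ltnW. Qed.

Lemma muln_neq1 q : m * q != 1.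
Proof. by rewrite muln_eq1 negb_and; case: eqVneq m_gt1 => [->|]. Qed.

Lemma divparts_graft k g : divparts m (with_ones k (mulparts m g)) =1 g.
Proof.
move=> q; rewrite /divparts /with_ones (negbTE (muln_neq1 q)) /mulparts.
by rewrite dvdn_mulr // mulKn.
Qed.

Lemma weight_divparts_graft N k g :
  weight N (divparts m (with_ones k (mulparts m g))) = weight N g.
Proof. exact/eq_weight/divparts_graft. Qed.

Lemma graft_divparts f : f 0 = 0 -> down_closed m f ->
  with_ones (f 1) (mulparts m (divparts m f)) =1 f.
Proof.
move=> f0 dc p; rewrite /with_ones /mulparts /divparts.
case: eqVneq => [-> // | p_neq1]; case: ifP => [dvd_mp | ndvd_mp].
  by rewrite mulnC divnK.
case: (posnP (f p)) => [-> // | /dc[/eqP | [dvd_mp _]]].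
  by rewrite (negbTE p_neq1).
by rewrite dvd_mp in ndvd_mp.
Qed.

Lemma down_closed_supp f p : down_closed m f -> 0 < f p -> p = 1 \/ m %| p.
Proof. by move=> dc /dc[-> | []]; [left | right]. Qed.

Lemma down_closed_divparts f : down_closed m f -> down_closed m (divparts m f).
Proof.
rewrite /divparts => dc q /dc[/eqP | [_]]; first by rewrite (negbTE (muln_neq1 q)).
rewrite mulKn // => fq_gt0; case: (dc _ fq_gt0) => [-> | [dvd_mq _]]; [by left | right].
by rewrite mulnC divnK.
Qed.

Lemma down_closed_graft k g : 0 < k -> down_closed m g ->
  down_closed m (with_ones k (mulparts m g)).
Proof.
move=> k_gt0 dc p; rewrite /with_ones /mulparts.
case: eqVneq => [-> | _]; [by left | case: ifP => // dvd_mp gpm_gt0; right].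
split=> //; case: eqVneq => // pm_neq1.
by case: (dc _ gpm_gt0) => [/eqP | [->]]; rewrite ?(negbTE pm_neq1).
Qed.

Lemma gapfree_weight_split N f :
  gapfree_fun m N f -> N = f 1 + m * weight N (divparts m f).
Proof.
case=> [[_ f_gt wf] dc]; rewrite -{1}wf.
by apply: weight_split => // p; apply: down_closed_supp.
Qed.

Lemma gapfree_ones_gt0 N f : 0 < N -> gapfree_fun m N f -> 0 < f 1.
Proof.
move=> N_gt0 [[f0 _ wf] dc]; case: (posnP (f 1)) => // f1_0.
move: N_gt0; rewrite -wf /weight big1 // => p _.
case: (posnP (f p)) => [-> | /(down_closed_one m_gt1 f0 dc)]; first by rewrite muln0.
by rewrite f1_0.
Qed.

Lemma gapfree_divparts N t f : gapfree_fun m N f -> weight N (divparts m f) = t ->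
  gapfree_fun m t (divparts m f).
Proof.
move=> gf wt; have def_N := gapfree_weight_split gf.
case: gf => [[f0 f_gt _] dc]; split; last exact: down_closed_divparts.
have fm_gt q : t < q -> divparts m f q = 0.
  move=> lt_tq; case: (leqP q N) => [le_qN | lt_Nq]; last first.
    by rewrite /divparts f_gt // (leq_trans lt_Nq) // leq_pmull.
  have := weight_term_le (divparts m f) le_qN; rewrite wt.
  case: (posnP (divparts m f q)) => // fq_gt0 /(leq_trans (leq_pmulr q fq_gt0)).
  by rewrite leqNgt lt_tq.
have le_tN : t <= N by rewrite def_N wt (leq_trans (leq_pmull _ m_gt0)) // leq_addl.
split=> //; first by rewrite /divparts muln0.
by rewrite -(weight_widen le_tN fm_gt).
Qed.

Lemma gapfree_graft N t g : m * t < N -> gapfree_fun m t g ->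
  gapfree_fun m N (with_ones (N - m * t) (mulparts m g)).
Proof.
move=> lt_mtN [[g0 g_gt wg] dc]; set F := with_ones _ _.
have dcF : down_closed m F by apply: down_closed_graft; rewrite // subn_gt0.
have F_gt p : N < p -> F p = 0.
  move=> lt_Np; rewrite /F /with_ones /mulparts; case: eqVneq => [p1 | _].
    by move: lt_Np; rewrite p1 ltnNge (leq_ltn_trans _ lt_mtN).
  case: ifP => // dvd_mp; apply: g_gt.
  by rewrite -(ltn_pmul2l m_gt0) [m * (p %/ m)]mulnC divnK // (ltn_trans lt_mtN).
split=> //; split=> //; first by rewrite /F /with_ones /mulparts dvdn0 div0n.
rewrite (weight_split m_gt1 F_gt) => [|p]; last exact: down_closed_supp.
have le_tN : t <= N by rewrite (leq_trans (leq_pmull _ m_gt0)) // ltnW.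
rewrite weight_divparts_graft (weight_widen le_tN g_gt) wg /F /with_ones eqxx.
by rewrite subnK // ltnW.
Qed.

End Parts.

(** * The recurrence for c *)

Lemma card_bij_in (T1 T2 : finType) (A1 : {pred T1}) (A2 : {pred T2})
    (f : T1 -> T2) (g : T2 -> T1) :
  {in A1, forall x, f x \in A2} -> {in A2, forall y, g y \in A1} ->
  {in A1, cancel f g} -> {in A2, cancel g f} -> #|A1| = #|A2|.
Proof.
move=> fA1 gA2 fK gK; apply/eqP; rewrite eqn_leq.
rewrite -[X in X <= _](card_in_imset (can_in_inj fK)).
rewrite -[X in _ && (X <= _)](card_in_imset (can_in_inj gK)).
by apply/andP; split; apply/subset_leq_card/subsetP => _ /imsetP[x Ax ->];
   [apply: fA1 | apply: gA2].
Qed.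

Definition divparts_weight m N (mu : {ffun 'I_N.+1 -> 'I_N.+1}) :=
  weight N (divparts m (mult mu)).

Definition shrink_partition m t {N} (mu : {ffun 'I_N.+1 -> 'I_N.+1}) :
  {ffun 'I_t.+1 -> 'I_t.+1} := tabulate t (divparts m (mult mu)).

Definition graft_partition m N {t} (nu : {ffun 'I_t.+1 -> 'I_t.+1}) :
  {ffun 'I_N.+1 -> 'I_N.+1} := tabulate N (with_ones (N - m * t) (mulparts m (mult nu))).

Section Fiber.
Variables m N t : nat.
Hypotheses (m_gt1 : 1 < m) (lt_mtN : m * t < N).

Let fiber := [set mu in gapfree_partitions m N | divparts_weight m mu == t].

Lemma mem_fiber mu :
  mu \in fiber -> gapfree_fun m N (mult mu) /\ divparts_weight m mu = t.
Proof. by rewrite inE => /andP[/(gapfree_partitionsP _ m_gt1) ? /eqP]. Qed.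

Lemma mult_shrink_partition mu : mu \in fiber ->
  mult (shrink_partition m t mu) =1 divparts m (mult mu).
Proof.
case/mem_fiber=> gmu wmu; apply: mult_tabulate_partition.
by case: (gapfree_divparts m_gt1 gmu wmu).
Qed.

Lemma mult_graft_partition nu : nu \in gapfree_partitions m t ->
  mult (graft_partition m N nu) =1 with_ones (N - m * t) (mulparts m (mult nu)).
Proof.
move/(gapfree_partitionsP _ m_gt1)=> gnu; apply: mult_tabulate_partition.
by case: (gapfree_graft m_gt1 lt_mtN gnu).
Qed.

Lemma shrink_partition_gapfree mu : mu \in fiber ->
  shrink_partition m t mu \in gapfree_partitions m t.
Proof.
by case/mem_fiber=> gmu wmu; apply: tabulate_gapfree (gapfree_divparts m_gt1 gmu wmu).
Qed.

Lemma graft_partition_fiber nu : nu \in gapfree_partitions m t ->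
  graft_partition m N nu \in fiber.
Proof.
move=> gnu; have gfnu := (gapfree_partitionsP _ m_gt1).1 gnu.
have [[_ nu_gt wnu] _] := gfnu.
rewrite inE (tabulate_gapfree m_gt1 (gapfree_graft m_gt1 lt_mtN gfnu)) /=; apply/eqP.
have le_tN : t <= N by rewrite (leq_trans (leq_pmull _ (ltnW m_gt1))) // ltnW.
rewrite /divparts_weight (eq_weight _ (fun q => mult_graft_partition gnu (m * q))).
by rewrite (weight_divparts_graft m_gt1) (weight_widen le_tN nu_gt).
Qed.

Lemma graft_shrink_partition :
  {in fiber, cancel (shrink_partition m t) (graft_partition m N)}.
Proof.
move=> mu fmu; apply: mult_inj => p; have [gmu wmu] := mem_fiber fmu.
have [[mu0 _ _] dc] := gmu.
have def_N := gapfree_weight_split m_gt1 gmu.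
rewrite -/(divparts_weight m mu) wmu in def_N.
rewrite mult_graft_partition ?shrink_partition_gapfree //.
have -> : N - m * t = mult mu 1 by rewrite [X in X - _]def_N addnK.
rewrite -[RHS](graft_divparts mu0 dc).
by rewrite /with_ones /mulparts mult_shrink_partition.
Qed.

Lemma shrink_graft_partition :
  {in gapfree_partitions m t, cancel (graft_partition m N) (shrink_partition m t)}.
Proof.
move=> nu gnu; apply: mult_inj => q.
rewrite mult_shrink_partition ?graft_partition_fiber // /divparts mult_graft_partition //.
exact: divparts_graft.
Qed.

Lemma card_fiber : #|fiber| = c m t.
Proof.
apply: (card_bij_in (f := shrink_partition m t) (g := graft_partition m N)).
- exact: shrink_partition_gapfree.
- exact: graft_partition_fiber.
- exact: graft_shrink_partition.
- exact: shrink_graft_partition.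
Qed.

End Fiber.

Section Fibers.
Variables m N : nat.
Hypotheses (m_gt1 : 1 < m) (N_gt0 : 0 < N).

Lemma divparts_weight_lt mu :
  mu \in gapfree_partitions m N -> m * divparts_weight m mu < N.
Proof.
move/(gapfree_partitionsP _ m_gt1) => gmu.
rewrite [X in _ < X](gapfree_weight_split m_gt1 gmu) -addn1 addnC leq_add2r.
exact: (gapfree_ones_gt0 m_gt1 N_gt0 gmu).
Qed.

Lemma card_fiberE t :
  #|[set mu in gapfree_partitions m N | divparts_weight m mu == t]| =
    if m * t < N then c m t else 0.
Proof.
case: ltnP => [lt_mtN | ge_mtN]; first exact: card_fiber.
apply: eq_card0 => mu; rewrite inE; apply/negbTE/andP => -[gmu /eqP wmu].
by move: ge_mtN; rewrite -wmu leqNgt divparts_weight_lt.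
Qed.

Lemma c_sum_fibers : c m N =
  \sum_(t < N.+1) #|[set mu in gapfree_partitions m N | divparts_weight m mu == t]|.
Proof.
change (c m N) with #|gapfree_partitions m N|; rewrite -sum1_card.
rewrite (partition_big (fun mu => inord (divparts_weight m mu) : 'I_N.+1) xpredT) //=.
apply: eq_bigr => t _; rewrite -sum1_card; apply: eq_bigl => mu; rewrite [in RHS]inE.
case: (boolP (mu \in gapfree_partitions m N)) => //= gmu.
have lt_weight_N : divparts_weight m mu < N.+1.
  by rewrite ltnS (leq_trans (leq_pmull _ (ltnW m_gt1))) // ltnW // divparts_weight_lt.
by rewrite -(inj_eq val_inj) /= inordK.
Qed.

End Fibers.

Lemma c0 m : c m 0 = 1.
Proof.
have mu_eq0 (mu : {ffun 'I_1 -> 'I_1}) p : mu p = 0 :> nat by case: (mu p) => [[]].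
have card_ffun1 : #|{ffun 'I_1 -> 'I_1}| = 1 by rewrite card_ffun !card_ord.
rewrite /c -[RHS]card_ffun1 -cardsT; apply: eq_card => mu.
rewrite !inE; apply/and3P; split.
- by rewrite /is_partition big_ord1 mu_eq0.
- by apply/forallP => p; rewrite mu_eq0.
- by apply/forallP => p; rewrite mu_eq0.
Qed.

Lemma c_succ m N : 1 < m -> c m N.+1 = \sum_(t < (N %/ m).+1) c m t.
Proof.
move=> m_gt1; rewrite c_sum_fibers //.
under eq_bigr => t _ do rewrite card_fiberE //.
rewrite -big_mkcond /= (big_ord_widen_cond N.+2 xpredT); last first.
  by rewrite !ltnS (leq_trans (leq_div _ _)).
by apply: eq_bigl => t /=; rewrite !ltnS leq_divRL ?(ltnW m_gt1) // mulnC.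
Qed.

(** * Congruences for the partial sums *)

Definition digits_value m (alpha : nat -> nat) j := \sum_(i < j) alpha i * m ^ i.

Lemma digits_valueS m alpha j :
  digits_value m alpha j.+1 = alpha 0 + m * digits_value m (fun i => alpha i.+1) j.
Proof.
rewrite /digits_value big_ord_recl muln1 big_distrr; congr (_ + _).
by apply: eq_bigr => i _; rewrite expnS mulnCA.
Qed.

Definition chi_sum (alpha : nat -> nat) j : int :=
  (\sum_(1 <= i < j.+1) \prod_(1 <= l < i.+1) ((alpha l)%:Z - chi alpha l))%R.

Lemma chi_sum0 alpha : chi_sum alpha 0 = 0%R.
Proof. by rewrite /chi_sum big_geq. Qed.

Lemma chi_sumS alpha j : chi_sum alpha j.+1 =
  (((alpha 1%N)%:Z - chi alpha 1%N) * (1 + chi_sum (fun i => alpha i.+1) j))%R.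
Proof.
rewrite /chi_sum big_add1 /= big_ltn // big_nat1 mulrDr mulr1 big_distrr /=.
congr (_ + _)%R; apply: eq_big_nat => i /andP[i_gt0 _].
rewrite big_ltn // big_add1 /=; congr (_ * _)%R; apply: eq_big_nat => l /andP[l_gt0 _].
by rewrite /chi /= (prednK l_gt0).
Qed.

Lemma modz_DMr (b a x y d : int) :
  (x = y %[mod d])%Z -> (b + a * x = b + a * y %[mod d])%Z.
Proof. by move=> exy; rewrite -modzDmr -modzMmr exy modzMmr modzDmr. Qed.

Section PartialSums.
Variables (m : nat) (S : nat -> nat).
Hypotheses (m_gt1 : 1 < m) (S0 : S 0 = 1) (SS : forall x, S x.+1 = S x + S (x %/ m)).

Let m_gt0 : 0 < m. Proof. exact: ltnW. Qed.

Lemma S_mulnD q a : a <= m -> S (m * q + a) = S (m * q) + a * S q.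
Proof.
elim: a => [|a IH] lt_am; first by rewrite addn0 mul0n addn0.
rewrite addnS SS IH ?(ltnW lt_am) // [m * q]mulnC divnMDl // divn_small // addn0.
by rewrite mulSnr addnA.
Qed.

Lemma S_mul_mod q : S (m * q) = 1 %[mod m].
Proof.
elim: q => [|q IH]; first by rewrite muln0 S0.
by rewrite mulnS addnC S_mulnD // [m * S q]mulnC addnC modnMDl.
Qed.

Lemma S_mulnD_modz q a : a <= m ->
  ((S (m * q + a))%:Z = 1 + a%:Z * (S q)%:Z %[mod m%:Z])%Z.
Proof.
move=> le_am; rewrite -[1%R]/(Posz 1) -PoszM -PoszD !modz_nat S_mulnD //.
by rewrite -modnDml S_mul_mod modnDml.
Qed.

Lemma S_mul_pred_modz q : 0 < q ->
  ((S (m * q).-1)%:Z = 1 - (S q.-1)%:Z %[mod m%:Z])%Z.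
Proof.
move=> q_gt0; have -> : (m * q).-1 = m * q.-1 + m.-1.
  by rewrite -{1}(prednK q_gt0) mulnS addnC -!subn1 addnBA.
rewrite S_mulnD_modz ?leq_pred // -subn1 -subzn //.
have -> : (1 + (m%:Z - 1%:Z) * (S q.-1)%:Z = (S q.-1)%:Z * m%:Z + (1 - (S q.-1)%:Z))%R.
  by ring.
by rewrite modzMDl.
Qed.

Lemma S_digits_modz j alpha : (forall i, i <= j -> alpha i < m) -> 0 < alpha 0 ->
  ((S (digits_value m (fun i => alpha i.+1) j))%:Z = 1 + chi_sum alpha j %[mod m%:Z])%Z.
Proof.
elim: j alpha => [|j IH] alpha alpha_lt alpha0_gt0.
  by rewrite chi_sum0 /digits_value big_ord0 S0.
rewrite digits_valueS addnC S_mulnD_modz ?(ltnW (alpha_lt _ _)) //.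
rewrite chi_sumS /chi /= alpha0_gt0 subr0.
case: (posnP (alpha 1)) => [-> | alpha1_gt0]; first by rewrite !mul0r.
by apply: modz_DMr; apply: IH => // i le_ij; apply: alpha_lt.
Qed.

Lemma S_digits_pred_pos j alpha : (forall i, i <= j -> alpha i < m) -> 0 < alpha 0 ->
  ((S (digits_value m alpha j.+1).-1)%:Z =
     (alpha 0%N)%:Z + ((alpha 0%N)%:Z - 1) * chi_sum alpha j %[mod m%:Z])%Z.
Proof.
move=> alpha_lt alpha0_gt0; rewrite digits_valueS.
have -> : (alpha 0 + m * digits_value m (fun i => alpha i.+1) j).-1 =
          m * digits_value m (fun i => alpha i.+1) j + (alpha 0).-1.
  by rewrite addnC -!subn1 addnBA.
rewrite S_mulnD_modz; last exact: leq_trans (leq_pred _) (ltnW (alpha_lt 0 _)).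
rewrite (modz_DMr _ _ (S_digits_modz alpha_lt alpha0_gt0)) -subn1 -subzn //.
by congr (_ %% _)%Z; ring.
Qed.

Lemma S_digits_pred_modz j alpha : (forall i, i <= j -> alpha i < m) ->
  0 < digits_value m alpha j.+1 ->
  ((S (digits_value m alpha j.+1).-1)%:Z =
     (alpha 0%N)%:Z + ((alpha 0%N)%:Z - 1) * chi_sum alpha j %[mod m%:Z])%Z.
Proof.
elim: j alpha => [|j IH] alpha alpha_lt n_gt0;
  case: (posnP (alpha 0)) => [alpha0_0 | alpha0_gt0]; try exact: S_digits_pred_pos.
  by move: n_gt0; rewrite digits_valueS alpha0_0 /digits_value big_ord0 muln0.
move: n_gt0; rewrite digits_valueS alpha0_0 add0n muln_gt0 => /andP[_ n_gt0].
have IH' := IH (fun i => alpha i.+1) (fun i le_ij => alpha_lt i.+1 le_ij) n_gt0.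
rewrite S_mul_pred_modz // -[in LHS]modzDmr -modzNm IH' modzNm modzDmr.
rewrite chi_sumS /chi /= alpha0_0 /=.
by congr (_ %% _)%Z; ring.
Qed.

End PartialSums.

Definition csum m x := \sum_(t < x.+1) c m t.

Lemma csum0 m : csum m 0 = 1.
Proof. by rewrite /csum big_ord1 c0. Qed.

Lemma csumS m x : 1 < m -> csum m x.+1 = csum m x + csum m (x %/ m).
Proof. by move=> m_gt1; rewrite /csum big_ord_recr /= (c_succ _ m_gt1). Qed.

Lemma c_mul m n : 1 < m -> 0 < n -> c m (m * n) = csum m n.-1.
Proof.
move=> m_gt1 n_gt0; have m_gt0 := ltnW m_gt1.
have -> : m * n = (n.-1 * m + m.-1).+1.
  by rewrite -{1}(prednK n_gt0) mulnS addnC -addnS prednK // [m * _]mulnC.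
by rewrite c_succ // divnMDl // divn_small ?prednK // addn0.
Qed.

Theorem theorem1p4 (m n j : nat) (alpha : nat -> nat) :
  (2 <= m)%N -> (0 < n)%N ->
  (m ^ j <= n < m ^ j.+1)%N ->
  n = (\sum_(i < j.+1) alpha i * m ^ i)%N ->
  (0 < alpha j)%N ->
  (forall i, (i <= j)%N -> (alpha i <= m - 1)%N) ->
  ((c m (m * n))%:Z =
     (alpha 0%N)%:Z + ((alpha 0%N)%:Z - 1) *
       \sum_(1%N <= i < j.+1) \prod_(1%N <= l < i.+1) ((alpha l)%:Z - chi alpha l)
   %[mod m%:Z])%Z.
Proof.
move=> m_gt1 n_gt0 _ def_n _ alpha_le.
have alpha_lt i : i <= j -> alpha i < m.
  by move/alpha_le; rewrite -ltnS subn1 prednK // ltnW.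
rewrite c_mul // def_n.
apply: (S_digits_pred_modz m_gt1 (csum0 m) (fun x => csumS x m_gt1) alpha_lt).
by rewrite /digits_value -def_n.
Qed.
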